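(* Assume the setting below and that $\mathcal{S}$ is pseudo-symmetric. Let $(x_0,y_0)\in L$ be the point with $\varphi(x_0,y_0)=g(\mathcal{S})+a$ and $(x_1,y_1)\in L$ the point with $\varphi(x_1,y_1)=g(\mathcal{S})/2+a$. Then (a) $2\varphi(x_1,y_1)=\varphi(x_0,y_0)+a$; and (b) if $(x',y'),(x'',y'')\in L$ satisfy $2\varphi(x_1,y_1)=\varphi(x',y')+\varphi(x'',y'')$, then $(x',y')=(x'',y'')=(x_1,y_1)$.
   Context: Setting (AA-semigroups). Let $a,d,k,c$ be positive integers with $\gcd(a,a+d,\ldots,a+kd,c)=1$ and $\gcd(a,d)=1$, and let $\mathcal{S}=\langle a,a+d,\ldots,a+kd,c\rangle$ be the numerical semigroup of non-negative integer combinations of these generators; $g(\mathcal{S})$ is its Frobenius number (largest integer not in $\mathcal{S}$). $\mathcal{S}$ is pseudo-symmetric if $g(\mathcal{S})$ is even and $\mathcal{S}\cup(g(\mathcal{S})-\mathcal{S})=\mathbb{Z}\setminus\{g(\mathcal{S})/2\}$. Put $s_{-1}=a$ and let $s_0$ be the unique integer with $ds_0\equiv c\pmod a$, $0\le s_0<a$. If $s_0=0$ set $m=-1$. Otherwise define $q_{i+1},s_{i+1}$ for $i=0,1,2,\ldots$ by $s_{i-1}=q_{i+1}s_i-s_{i+1}$ with $0\le s_{i+1}<s_i$, and let $m$ be the index with $s_m>0=s_{m+1}$ (so $s_m=\gcd(a,c)$). Define $P_{-1}=0$, $P_0=1$, $P_{i+1}=q_{i+1}P_i-P_{i-1}$ for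 $i=0,\ldots,m$, and $R_i=\frac1a\big((a+kd)s_i-kcP_i\big)$ for $-1\le i\le m+1$; these are integers with $-c/s_m=R_{m+1}<R_m<\cdots<R_0<R_{-1}=a+kd$. Let $v$ be the unique integer with $R_{v+1}\le0<R_v$. Let $L=A\cup B$, where $A=\{(x,y)\in\mathbb{Z}^2:0\le x\le s_v-1,\ 0\le y\le P_{v+1}-P_v-1\}$ and $B=\{(x,y)\in\mathbb{Z}^2:0\le x\le s_v-s_{v+1}-1,\ P_{v+1}-P_v\le y\le P_{v+1}-1\}$. Define $\varphi:\mathbb{Z}^2\to\mathbb{Z}$, $\varphi(x,y)=\lceil x/k\rceil a+xd+yc$. It is known (Rødseth) that $|L|=a$ and $\varphi$ maps $L$ bijectively onto $\mathrm{Ap}(\mathcal{S};a)=\{s\in\mathcal{S}:s-a\notin\mathcal{S}\}$; consequently $g(\mathcal{S})+a=\max\varphi(L)$ is attained at $(s_v-s_{v+1}-1,P_{v+1}-1)$ or at $(s_v-1,P_{v+1}-P_v-1)$. *)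

From Stdlib Require Import ZArith Lia.
Open Scope Z_scope.

Fixpoint sumZ (F : Z -> Z) (n : nat) : Z :=
  match n with
  | O => 0
  | S n' => sumZ F n' + F (Z.of_nat n')
  end.

(* n is in S = <a, a+d, ..., a+kd, c>: a non-negative integer combination
   of the generators a + i*d (0 <= i <= k) and c. *)
Definition inS (a d k c n : Z) : Prop :=
  exists (f : Z -> Z) (e : Z),
    (forall i, 0 <= f i) /\ 0 <= e /\
    n = sumZ (fun i => f i * (a + i * d)) (S (Z.to_nat k)) + e * c.

Definition gcd_gens_one (a d k c : Z) : Prop :=
  forall z, (z | a) -> (forall i, 0 <= i <= k -> (z | a + i * d)) ->
    (z | c) -> (z | 1).

Definition is_frobenius (a d k c g : Z) : Prop :=
  ~ inS a d k c g /\ forall n, g < n -> inS a d k c n.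

Definition pseudo_symmetric (a d k c g : Z) : Prop :=
  Z.even g = true /\
  forall z, (inS a d k c z \/ inS a d k c (g - z)) <-> z <> g / 2.

(* One step of the recursion  s_{i-1} = q_{i+1} s_i - s_{i+1},
   0 <= s_{i+1} < s_i, i.e. q_{i+1} = ceil(s_{i-1}/s_i);
   P_{i+1} = q_{i+1} P_i - P_{i-1}.
   State = (s_{i-1}, s_i, P_{i-1}, P_i). *)
Definition step (st : Z * Z * Z * Z) : Z * Z * Z * Z :=
  let '(sp, s, Pp, P) := st in
  let q := - ((- sp) / s) in
  (s, q * s - sp, P, q * P - Pp).

(* state a s0 n = (s_{n-1}, s_n, P_{n-1}, P_n) *)
Definition state (a s0 : Z) (n : nat) : Z * Z * Z * Z :=
  Nat.iter n step (a, s0, 0, 1).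

(* s_i and P_i for i >= -1 (s_{-1} = a, P_{-1} = 0); meaningful for
   -1 <= i <= m+1 *)
Definition s_ (a s0 i : Z) : Z :=
  if i <? 0 then a else let '(_, s, _, _) := state a s0 (Z.to_nat i) in s.

Definition P_ (a s0 i : Z) : Z :=
  if i <? 0 then 0 else let '(_, _, _, P) := state a s0 (Z.to_nat i) in P.

(* numerator of R_i:  R_i = Rnum i / a  with a > 0 *)
Definition Rnum (a d k c s0 i : Z) : Z :=
  (a + k * d) * s_ a s0 i - k * c * P_ a s0 i.

Definition ceil_div (x k : Z) : Z := - ((- x) / k).

Definition phi (a d k c x y : Z) : Z :=
  ceil_div x k * a + x * d + y * c.

(* (x,y) in L = A u B *)
Definition inL (a s0 v x y : Z) : Prop :=
  let sv := s_ a s0 v in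
  let sv1 := s_ a s0 (v + 1) in
  let Pv := P_ a s0 v in
  let Pv1 := P_ a s0 (v + 1) in
  (0 <= x <= sv - 1 /\ 0 <= y <= Pv1 - Pv - 1) \/
  (0 <= x <= sv - sv1 - 1 /\ Pv1 - Pv <= y <= Pv1 - 1).

(* Every phi(p) - a with p in L lies outside S, since phi(L) lies in Ap(S; a); so if
   phi(p') + phi(p'') = g + 2a, both phi(p') - a and phi(p'') - a equal g/2.
   Finally phi(p) mod a determines p, because (x, y) |-> x + y s0 is injective
   from L into Z/aZ. *)
From Stdlib Require Import ZArith Lia.
Open Scope Z_scope.

Lemma step_quotient_bounds sp s : 0 < s -> s < sp ->
  2 <= - ((- sp) / s) /\ 0 <= - ((- sp) / s) * s - sp < s.
Proof.
  intros Hs Hlt.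
  pose proof (Z.div_mod (- sp) s ltac:(lia)).
  pose proof (Z.mod_pos_bound (- sp) s Hs).
  split; nia.
Qed.

Definition state_s (st : Z * Z * Z * Z) : Z := let '(_, s, _, _) := st in s.

Lemma state_invariant a s0 : 0 <= s0 < a -> forall n : nat,
  (forall j, (j < n)%nat -> 0 < state_s (state a s0 j)) ->
  let '(sp, s, Pp, P) := state a s0 n in
  sp * P - s * Pp = a /\ (a | s - P * s0) /\ (a | sp - Pp * s0) /\
  0 <= Pp < P /\ 0 <= s < sp.
Proof.
  intros Hs0; induction n as [|n IH]; intros Hpos.
  - change (state a s0 0) with (a, s0, 0, 1).
    repeat split; try lia; [exists 0 | exists 1]; lia.
  - pose proof (Hpos n ltac:(lia)) as Hsn.
    pose proof (IH (fun j Hj => Hpos j ltac:(lia))) as IHn; revert IHn.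
    change (state a s0 (S n)) with (step (state a s0 n)).
    unfold state_s in Hsn.
    destruct (state a s0 n) as [[[sp s] Pp] P].
    intros (Hdet & [u Hu] & [w Hw] & HP & Hs); cbn.
    destruct (step_quotient_bounds sp s Hsn ltac:(lia)) as [Hq Hr].
    set (q := - ((- sp) / s)) in *.
    repeat split; try nia; [exists (q * u - w) | exists u]; nia.
Qed.

Lemma s_P_of_state a s0 v sp s Pp P : -1 <= v ->
  state a s0 (Z.to_nat (v + 1)) = (sp, s, Pp, P) ->
  s_ a s0 v = sp /\ s_ a s0 (v + 1) = s /\ P_ a s0 v = Pp /\ P_ a s0 (v + 1) = P.
Proof.
  intros Hv E; unfold s_, P_.
  rewrite (proj2 (Z.ltb_ge (v + 1) 0) ltac:(lia)), E.
  destruct (Z.ltb_spec v 0).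
  - replace v with (-1) in E by lia; cbn in E; inversion E; auto.
  - replace (Z.to_nat (v + 1)) with (S (Z.to_nat v)) in E by lia.
    change (state a s0 (S (Z.to_nat v))) with (step (state a s0 (Z.to_nat v))) in E.
    destruct (state a s0 (Z.to_nat v)) as [[[? ?] ?] ?].
    cbn in E; inversion E; auto.
Qed.

Lemma state_s_of_nat a s0 j : state_s (state a s0 j) = s_ a s0 (Z.of_nat j).
Proof.
  unfold s_; destruct (Z.ltb_spec (Z.of_nat j) 0); [lia|].
  rewrite Nat2Z.id; unfold state_s; now destruct (state a s0 j) as [[[? ?] ?] ?].
Qed.

Lemma s_P_invariants a s0 v : 0 <= s0 < a -> -1 <= v ->
  (forall i, -1 <= i <= v -> 0 < s_ a s0 i) ->
  s_ a s0 v * P_ a s0 (v + 1) - s_ a s0 (v + 1) * P_ a s0 v = a /\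
  (a | s_ a s0 v - P_ a s0 v * s0) /\ (a | s_ a s0 (v + 1) - P_ a s0 (v + 1) * s0) /\
  0 <= P_ a s0 v < P_ a s0 (v + 1) /\ 0 <= s_ a s0 (v + 1) < s_ a s0 v.
Proof.
  intros Hs0 Hv Hpos.
  pose proof (state_invariant a s0 Hs0 (Z.to_nat (v + 1))) as Hinv.
  destruct (state a s0 (Z.to_nat (v + 1))) as [[[sp s] Pp] P] eqn:E.
  destruct (s_P_of_state a s0 v sp s Pp P Hv E) as (-> & -> & -> & ->).
  destruct Hinv as (Hdet & Hs & Hsp & HP & Hlt).
  { intros j Hj; rewrite state_s_of_nat; apply Hpos; lia. }
  tauto.
Qed.

Section SetL.

Variables a s0 sv sv1 Pv Pv1 : Z.
Hypothesis Hsv : 0 <= sv1 < sv.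
Hypothesis HPv : 0 <= Pv < Pv1.

Definition inLp (x y : Z) : Prop :=
  (0 <= x <= sv - 1 /\ 0 <= y <= Pv1 - Pv - 1) \/
  (0 <= x <= sv - sv1 - 1 /\ Pv1 - Pv <= y <= Pv1 - 1).

(* A shift by al (sv, -Pv) + be (-sv1, Pv1) with al, be >= 1 leaves L:
   unless al = be it overshoots one coordinate, and when al = be it moves a point
   with x >= sv - sv1 (hence in A) to height y >= Pv1 - Pv (hence outside A). *)
Lemma inLp_no_positive_shift x y x' y' al be :
  inLp x y -> inLp x' y' ->
  x - x' = al * sv - be * sv1 -> y - y' = be * Pv1 - al * Pv ->
  1 <= al -> 1 <= be -> False.
Proof.
  intros HL HL' Ex Ey Hal Hbe.
  assert (Bx : x - x' <= sv - 1) by (unfold inLp in *; lia).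
  assert (By : y - y' <= Pv1 - 1) by (unfold inLp in *; lia).
  assert (Hab : be = al).
  { destruct (Z.lt_trichotomy al be) as [Hlt|[Heq|Hgt]]; [exfalso| |exfalso]; nia. }
  subst be.
  assert (al * (sv - sv1) >= sv - sv1) by nia.
  assert (al * (Pv1 - Pv) >= Pv1 - Pv) by nia.
  unfold inLp in *; nia.
Qed.

Hypothesis Hsv_cong : (a | sv - Pv * s0).
Hypothesis Hsv1_cong : (a | sv1 - Pv1 * s0).

Section Reduction.

Variables A B : Z.
Hypothesis HRv : 0 <= A * sv - B * Pv.
Hypothesis HRv1 : A * sv1 - B * Pv1 <= 0.

(* The moves (X, e) -> (X - sv, e + Pv) and (X, e) -> (X - (sv - sv1), e - (Pv1 - Pv))
   preserve the residue of X + e s0 and, by the signs of HRv and HRv1, do not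
   increase the weight X A + e B; they bring any (X, e) with 0 <= e < Pv1 into L. *)
Lemma inLp_reduce_bounded (n : nat) X e : 0 <= X <= Z.of_nat n -> 0 <= e < Pv1 ->
  exists x y, inLp x y /\ (a | (X - x) + (e - y) * s0) /\ x * A + y * B <= X * A + e * B.
Proof.
  destruct Hsv_cong as [u Hu], Hsv1_cong as [w Hw].
  revert X e; induction n as [|n IH]; intros X e HX He.
  { exists X, e; split; [unfold inLp; lia | split; [exists 0|]; lia]. }
  destruct (Z.lt_ge_cases e (Pv1 - Pv)) as [Hlo|Hhi].
  - destruct (Z.lt_ge_cases X sv).
    { exists X, e; split; [unfold inLp; lia | split; [exists 0|]; lia]. }
    destruct (IH (X - sv) (e + Pv) ltac:(lia) ltac:(lia)) as (x & y & HL & [z Hz] & Hwt).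
    exists x, y; split; [exact HL | split; [exists (z + u)|]]; nia.
  - destruct (Z.lt_ge_cases X (sv - sv1)).
    { exists X, e; split; [unfold inLp; lia | split; [exists 0|]; lia]. }
    destruct (IH (X - (sv - sv1)) (e - (Pv1 - Pv)) ltac:(lia) ltac:(lia))
      as (x & y & HL & [z Hz] & Hwt).
    exists x, y; split; [exact HL | split; [exists (z + u - w)|]]; nia.
Qed.

Lemma inLp_reduce X e : 0 <= X -> 0 <= e ->
  exists x y, inLp x y /\ (a | (X - x) + (e - y) * s0) /\ x * A + y * B <= X * A + e * B.
Proof.
  intros HX He.
  pose proof (Z.div_mod e Pv1 ltac:(lia)).
  pose proof (Z.mod_pos_bound e Pv1 ltac:(lia)).
  set (t := e / Pv1) in *; set (r := e mod Pv1) in *.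
  assert (Ht : 0 <= t) by (apply Z.div_pos; lia).
  (* first trade t Pv1 units of e for t sv1 units of X *)
  destruct (inLp_reduce_bounded (Z.to_nat (X + t * sv1)) (X + t * sv1) r ltac:(nia) ltac:(lia))
    as (x & y & HL & [z Hz] & Hwt).
  destruct Hsv1_cong as [w Hw].
  exists x, y; split; [exact HL | split; [exists (z - t * w)|]]; nia.
Qed.

End Reduction.

Hypothesis Ha : 0 < a.
Hypothesis Hdet : sv * Pv1 - sv1 * Pv = a.

(* Since the lattice {(X, Y) : a | X + Y s0} has basis (sv, -Pv), (-sv1, Pv1)
   (its covolume is a = det), a difference of two points of L is an integer
   combination of them; all sign patterns but (0, 0) contradict the bounds on L or
   inLp_no_positive_shift. *)
Lemma inLp_residue_inj x y x' y' :
  inLp x y -> inLp x' y' -> (a | (x - x') + (y - y') * s0) -> x = x' /\ y = y'.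
Proof.
  destruct Hsv_cong as [u Hu], Hsv1_cong as [w Hw].
  intros HL HL' [z Hz].
  set (Dx := x - x') in *; set (Dy := y - y') in *.
  assert (HDx : Dx = z * a - Dy * s0) by lia.
  set (al := Pv1 * z + Dy * w); set (be := Pv * z + Dy * u).
  assert (Eal : Dx * Pv1 + Dy * sv1 = al * a).
  { subst al; rewrite HDx; replace sv1 with (Pv1 * s0 + w * a) by lia; ring. }
  assert (Ebe : Dx * Pv + Dy * sv = be * a).
  { subst be; rewrite HDx; replace sv with (Pv * s0 + u * a) by lia; ring. }
  assert (Ex : Dx = al * sv - be * sv1).
  { apply (Z.mul_reg_l _ _ a); [lia|].
    transitivity (sv * (Dx * Pv1 + Dy * sv1) - sv1 * (Dx * Pv + Dy * sv));
      [rewrite <- Hdet; ring | rewrite Eal, Ebe; ring]. }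
  assert (Ey : Dy = be * Pv1 - al * Pv).
  { apply (Z.mul_reg_l _ _ a); [lia|].
    transitivity (Pv1 * (Dx * Pv + Dy * sv) - Pv * (Dx * Pv1 + Dy * sv1));
      [rewrite <- Hdet; ring | rewrite Eal, Ebe; ring]. }
  clearbody al be; subst Dx Dy.
  assert (Bx : - (sv - 1) <= x - x' <= sv - 1) by (unfold inLp in *; lia).
  assert (By : - (Pv1 - 1) <= y - y' <= Pv1 - 1) by (unfold inLp in *; lia).
  destruct (Z.lt_trichotomy al 0) as [Hal|[Hal|Hal]];
    destruct (Z.lt_trichotomy be 0) as [Hbe|[Hbe|Hbe]]; try subst al; try subst be.
  - exfalso; apply (inLp_no_positive_shift x' y' x y (- al) (- be)); auto; lia.
  - exfalso; assert (al * sv <= - sv) by (clear - Hal Hsv; nia); lia.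
  - exfalso; assert (be * Pv1 >= Pv1) by (clear - Hbe HPv; nia).
    assert (al * Pv <= 0) by (clear - Hal HPv; nia); lia.
  - exfalso; assert (be * Pv1 <= - Pv1) by (clear - Hbe HPv; nia); lia.
  - lia.
  - exfalso; assert (be * Pv1 >= Pv1) by (clear - Hbe HPv; nia); lia.
  - exfalso; assert (be * Pv1 <= - Pv1) by (clear - Hbe HPv; nia).
    assert (al * Pv >= 0) by (clear - Hal HPv; nia); lia.
  - exfalso; assert (al * sv >= sv) by (clear - Hal Hsv; nia); lia.
  - exfalso; apply (inLp_no_positive_shift x y x' y' al be); auto; lia.
Qed.

End SetL.

Lemma sumZ_generators a d f N :
  sumZ (fun i => f i * (a + i * d)) N = a * sumZ f N + d * sumZ (fun i => f i * i) N.
Proof. induction N as [|N IH]; cbn; [ring | rewrite IH; ring]. Qed.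

Lemma sumZ_weighted_bounds f K N : (forall i, 0 <= f i) -> Z.of_nat N <= K + 1 ->
  0 <= sumZ f N /\ 0 <= sumZ (fun i => f i * i) N <= K * sumZ f N.
Proof.
  intros Hf; induction N as [|N IH]; intros HN; cbn; [lia|].
  destruct (IH ltac:(lia)).
  pose proof (Hf (Z.of_nat N)).
  assert (f (Z.of_nat N) * Z.of_nat N <= K * f (Z.of_nat N)) by nia.
  nia.
Qed.

Lemma ceil_div_lt x k : 0 < k -> k * ceil_div x k < x + k.
Proof.
  intros Hk; unfold ceil_div.
  pose proof (Z.div_mod (- x) k ltac:(lia)).
  pose proof (Z.mod_pos_bound (- x) k Hk).
  nia.
Qed.

Lemma phi_residue a d k c s0 x y : (a | d * s0 - c) ->
  (a | phi a d k c x y - d * (x + y * s0)).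
Proof.
  intros [w Hw]; exists (ceil_div x k - y * w); unfold phi.
  replace c with (d * s0 - w * a) by lia; ring.
Qed.

Lemma phi_eq_residue a d k c s0 x y x' y' : Z.gcd a d = 1 -> (a | d * s0 - c) ->
  phi a d k c x y = phi a d k c x' y' -> (a | (x - x') + (y - y') * s0).
Proof.
  intros Hg Hc E; apply (Z.gauss _ d); [|exact Hg].
  destruct (phi_residue a d k c s0 x y Hc) as [z Hz].
  destruct (phi_residue a d k c s0 x' y' Hc) as [z' Hz'].
  exists (z' - z); lia.
Qed.

(* Write phi(x, y) - a = a t + d X + e c with 0 <= X <= k t and reduce (X, e) into L
   for the weight W(x, y) = x (a + k d) + y k c.  The reduced point has the residue
   of (x, y), hence is (x, y), and then
   k phi(x, y) < W(x, y) + k a <= W(X, e) + k a <= k (phi(x, y) - a) + k a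
   by the ceiling bound, the reduction, and X <= k t. *)
Lemma phi_pred_notin_S a d k c s0 sv sv1 Pv Pv1 x y :
  0 < a -> 0 < k -> Z.gcd a d = 1 -> (a | d * s0 - c) ->
  0 <= sv1 < sv -> 0 <= Pv < Pv1 -> sv * Pv1 - sv1 * Pv = a ->
  (a | sv - Pv * s0) -> (a | sv1 - Pv1 * s0) ->
  0 < (a + k * d) * sv - k * c * Pv -> (a + k * d) * sv1 - k * c * Pv1 <= 0 ->
  inLp sv sv1 Pv Pv1 x y -> ~ inS a d k c (phi a d k c x y - a).
Proof.
  intros Ha Hk Hg Hc Hsv HPv Hdet Hsv_c Hsv1_c HRv HRv1 HL (f & e & Hf & He & E).
  rewrite sumZ_generators in E.
  destruct (sumZ_weighted_bounds f k (S (Z.to_nat k)) Hf ltac:(lia)) as [Ht HX].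
  set (X := sumZ (fun i => f i * i) _) in *; set (t := sumZ f _) in *.
  destruct (inLp_reduce a s0 sv sv1 Pv Pv1 Hsv HPv Hsv_c Hsv1_c (a + k * d) (k * c)
              ltac:(lia) HRv1 X e ltac:(lia) He) as (x' & y' & HL' & [z Hz] & Hwt).
  assert (Hres : (a | (x - X) + (y - e) * s0)).
  { apply (Z.gauss _ d); [|exact Hg].
    destruct (phi_residue a d k c s0 x y Hc) as [z1 Hz1].
    destruct Hc as [w Hw].
    exists (1 + t - z1 - e * w); lia. }
  destruct Hres as [z' Hz'].
  destruct (inLp_residue_inj a s0 sv sv1 Pv Pv1 Hsv HPv Hsv_c Hsv1_c Ha Hdet x y x' y' HL HL')
    as [-> ->]; [exists (z + z'); lia|].
  pose proof (ceil_div_lt x' k Hk).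
  unfold phi in E; nia.
Qed.

Lemma pseudo_symmetric_split a d k c g z z' : pseudo_symmetric a d k c g ->
  ~ inS a d k c z -> ~ inS a d k c z' -> z + z' = g -> z = g / 2.
Proof.
  intros [_ Hps] Hz Hz' Hsum.
  destruct (Z.eq_dec z (g / 2)) as [|Hne]; [assumption|].
  exfalso; destruct (proj2 (Hps z) Hne) as [H|H]; [exact (Hz H)|].
  apply Hz'; now replace z' with (g - z) by lia.
Qed.

Theorem mainTheorem6 (a d k c s0 m v g x0 y0 x1 y1 : Z) :
  0 < a -> 0 < d -> 0 < k -> 0 < c ->
  gcd_gens_one a d k c -> Z.gcd a d = 1 ->
  0 <= s0 < a -> (a | d * s0 - c) ->
  -1 <= m -> (forall i, -1 <= i <= m -> 0 < s_ a s0 i) -> s_ a s0 (m + 1) = 0 ->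
  -1 <= v <= m -> Rnum a d k c s0 (v + 1) <= 0 -> 0 < Rnum a d k c s0 v ->
  is_frobenius a d k c g -> pseudo_symmetric a d k c g ->
  inL a s0 v x0 y0 -> phi a d k c x0 y0 = g + a ->
  inL a s0 v x1 y1 -> phi a d k c x1 y1 = g / 2 + a ->
  2 * phi a d k c x1 y1 = phi a d k c x0 y0 + a /\
  (forall x' y' x'' y'',
     inL a s0 v x' y' -> inL a s0 v x'' y'' ->
     2 * phi a d k c x1 y1 = phi a d k c x' y' + phi a d k c x'' y'' ->
     (x', y') = (x1, y1) /\ (x'', y'') = (x1, y1)).
Proof.
  intros Ha _ Hk _ _ Hg Hs0 Hc _ Hpos _ Hv HRv1 HRv _ Hps HL0 E0 HL1 E1.
  assert (Hhalf : g = 2 * (g / 2)).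
  { destruct Hps as [Hev _]; apply Z.even_spec in Hev as [h ->].
    rewrite (Z.mul_comm 2 h), Z.div_mul; lia. }
  split; [lia|].
  intros x' y' x'' y'' HL' HL'' Hsum.
  destruct (s_P_invariants a s0 v Hs0 ltac:(lia) ltac:(intros; apply Hpos; lia))
    as (Hdet & Hsv_c & Hsv1_c & HPv & Hsv).
  pose proof (fun x y HL =>
    phi_pred_notin_S a d k c s0 _ _ _ _ x y Ha Hk Hg Hc Hsv HPv Hdet Hsv_c Hsv1_c HRv HRv1 HL)
    as Hapery.
  assert (E' : phi a d k c x' y' - a = g / 2).
  { apply (pseudo_symmetric_split a d k c g _ (phi a d k c x'' y'' - a) Hps);
      [apply Hapery.. | ]; auto; lia. }
  pose proof (fun x y HL E =>
    inLp_residue_inj a s0 _ _ _ _ Hsv HPv Hsv_c Hsv1_c Ha Hdet x y x1 y1 HL HL1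
      (phi_eq_residue a d k c s0 x y x1 y1 Hg Hc E)) as Hinj.
  destruct (Hinj x' y' HL' ltac:(lia)) as [-> ->].
  destruct (Hinj x'' y'' HL'' ltac:(lia)) as [-> ->].
  auto.
Qed.
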